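(* Let $m\ge 1$ and $u,v\in\{0,1\}^m$. Then there exists a tilde-transformation from $u$ to $v$ of length $\mathrm{dist}_\sim(u,v)$ in which, for every $i=1,\dots,m$, the symbol in position $i$ is modified by at most one of the operations. In other words, a minimal tilde-transformation from $u$ to $v$ always exists.
   Context: Words are over the binary alphabet $\{0,1\}$; for $w=a_1\cdots a_m$ write $w[i]=a_i$. The replacement $R_i$ replaces $a_i$ by the other binary symbol; it modifies position $i$. The swap $S_i$ is defined only when $a_i\neq a_{i+1}$ and exchanges $a_i$ and $a_{i+1}$; it modifies positions $i$ and $i+1$. For equal-length words $u,v$, the tilde-distance $\mathrm{dist}_\sim(u,v)$ is the minimum number of replacements and swaps needed to transform $u$ into $v$. A tilde-transformation of length $h$ from $u$ to $v$ is a sequence of words $(w_0,\dots,w_h)$ with $w_0=u$, $w_h=v$, and each $w_{k+1}$ obtained from $w_k$ by a single replacement or swap. It is minimal if $h=\mathrm{dist}_\sim(u,v)$ and each position is modified by at most one of its operations. *)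

From mathcomp Require Import all_boot.
Set Implicit Arguments. Unset Strict Implicit. Unset Printing Implicit Defensive.

(* Binary words are [seq bool]; positions are 0-indexed (paper's position i
   is index i-1 here). *)
Definition word := seq bool.

Inductive op := Rep of nat | Swp of nat.

Definition apply_op (w : word) (o : op) : option word :=
  match o with
  | Rep i => if i < size w then Some (set_nth false w i (~~ nth false w i))
             else None
  | Swp i => if (i.+1 < size w) && (nth false w i != nth false w i.+1)
             then Some (set_nth false (set_nth false w i (nth false w i.+1))
                                i.+1 (nth false w i))
             else None
  end.

Definition modified (o : op) : seq nat :=
  match o with Rep i => [:: i] | Swp i => [:: i; i.+1] end.

Fixpoint run_words (w : word) (ops : seq op) : option (seq word) :=
  match ops with
  | [::] => Some [:: w]
  | o :: ops' => match apply_op w o with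
                 | Some w' => match run_words w' ops' with
                              | Some ws => Some (w :: ws)
                              | None => None
                              end
                 | None => None
                 end
  end.

Definition tilde_transformation (u v : word) (ops : seq op) : Prop :=
  exists ws, run_words u ops = Some ws /\ last u ws = v.

Definition is_dist_tilde (u v : word) (d : nat) : Prop :=
  (exists ops, tilde_transformation u v ops /\ size ops = d) /\
  (forall ops, tilde_transformation u v ops -> d <= size ops).

Definition minimal_tilde_transformation (u v : word) (ops : seq op) : Prop :=
  tilde_transformation u v ops /\ is_dist_tilde u v (size ops) /\
  uniq (flatten (map modified ops)).

From Stdlib Require Import Classical Wf_nat.
From mathcomp Require Import all_boot zify.

Set Implicit Arguments. Unset Strict Implicit. Unset Printing Implicit Defensive.

(* The proof works with "plans": disjoint transformations read from left to
   right, in which each block of the word is either kept, replaced (one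
   position, cost 1) or swapped (two adjacent distinct symbols, cost 1).
   Realizing a plan block by block gives an operation sequence whose length is
   the cost of the plan and in which every position is modified at most once
   ([plan_realized]).  Conversely, the key fact [step_plan] says that one
   extra operation in front of a plan can be absorbed into a plan costing at
   most one more; iterating it, every tilde-transformation of length h is
   dominated by a plan of cost at most h ([transformation_plan]).  Plans exist
   between any two words of equal length, so a plan of least cost exists; its
   realization is a tilde-transformation whose length is the tilde-distance
   and which modifies every position at most once. *)

Fixpoint exec (w : word) (ops : seq op) : option word :=
  match ops with
  | [::] => Some w
  | o :: ops' => if apply_op w o is Some w' then exec w' ops' else None
  end.

(* The last word of a run is the result of [exec]; the default of [last] is
   irrelevant since a run is never empty. *)
Lemma run_words_last x w ops :
  omap (last x) (run_words w ops) = exec w ops.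
Proof.
elim: ops x w => [|o ops IH] x w //=.
case: (apply_op w o) => // w'.
by rewrite -(IH w); case: (run_words w' ops).
Qed.

Lemma tilde_transformation_exec u v ops :
  tilde_transformation u v ops <-> exec u ops = Some v.
Proof.
split; first by case=> ws [E <-]; rewrite -(run_words_last u) E.
rewrite -(run_words_last u).
by case E: (run_words u ops) => //= [ws] [<-]; exists ws.
Qed.

Definition shift (o : op) : op :=
  match o with Rep i => Rep i.+1 | Swp i => Swp i.+1 end.

Lemma apply_shift a w o :
  apply_op (a :: w) (shift o) = omap (cons a) (apply_op w o).
Proof. by case: o => i /=; rewrite ltnS; case: ifP. Qed.

Lemma exec_shift a w ops :
  exec (a :: w) (map shift ops) = omap (cons a) (exec w ops).
Proof.
elim: ops w => [|o ops IH] w //=.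
by rewrite apply_shift; case: (apply_op w o).
Qed.

Lemma modified_shift ops :
  flatten (map modified (map shift ops)) =
  map succn (flatten (map modified ops)).
Proof. by elim: ops => [|[] i ops IH] //=; rewrite IH. Qed.

Lemma uniq_modified_shift ops :
  uniq (flatten (map modified (map shift ops))) =
  uniq (flatten (map modified ops)).
Proof. by rewrite modified_shift map_inj_uniq //; exact: succn_inj. Qed.

Inductive Plan : word -> word -> nat -> Prop :=
| PNil : Plan [::] [::] 0
| PKeep a u v c : Plan u v c -> Plan (a :: u) (a :: v) c
| PRep a b u v c : a != b -> Plan u v c -> Plan (a :: u) (b :: v) c.+1
| PSwp a b u v c : a != b -> Plan u v c -> Plan (a :: b :: u) (b :: a :: v) c.+1.

Lemma plan_realized u v c : Plan u v c -> exists ops,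
  [/\ exec u ops = Some v, size ops = c & uniq (flatten (map modified ops))].
Proof.
elim=> {u v c} [|a u v c _ [ops [E S U]]|a b u v c ab _ [ops [E S U]]
                |a b u v c ab _ [ops [E S U]]].
- by exists [::].
- exists (map shift ops).
  by rewrite exec_shift E size_map uniq_modified_shift.
- exists (Rep 0 :: map shift ops); split.
  + by rewrite /= exec_shift E /=; case: a b ab => -[].
  + by rewrite /= size_map S.
  + by rewrite /= uniq_modified_shift U modified_shift andbT; apply/mapP => -[].
- exists (Swp 0 :: map shift (map shift ops)); split.
  + by rewrite /= ab !exec_shift E.
  + by rewrite /= !size_map S.
  + rewrite /= !uniq_modified_shift U !modified_shift inE andbT.
    by apply/andP; split; apply/mapP => -[// x /mapP [y _ ->]].
Qed.

Lemma plan_refl v : Plan v v 0.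
Proof. by elim: v => [|a v IH]; constructor. Qed.

Lemma plan_exists u v : size u = size v -> exists c, Plan u v c.
Proof.
elim: u v => [|a u IH] [|b v] //=; first by exists 0; exact: PNil.
case=> /IH [c P].
have [<-|ab] := eqVneq a b; first by exists c; exact: PKeep.
by exists c.+1; exact: PRep.
Qed.

Lemma bool_neq_trans (a b c : bool) : a != b -> b != c -> a = c.
Proof. by case: a; case: b; case: c. Qed.

Inductive Step : word -> word -> Prop :=
| SRep a b t : a != b -> Step (a :: t) (b :: t)
| SSwp a b t : a != b -> Step (a :: b :: t) (b :: a :: t)
| SCons a t t' : Step t t' -> Step (a :: t) (a :: t').

Lemma apply_step u o u' : apply_op u o = Some u' -> Step u u'.
Proof.
elim: u o u' => [|a t IH] o u'; first by case: o => i; rewrite /= ?andFb.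
case: o => [[|i]|[|i]].
- by case=> <-; apply: SRep; case: a.
- rewrite -[Rep i.+1]/(shift (Rep i)) apply_shift.
  by case E: (apply_op t (Rep i)) => [w|] //= [<-]; apply: SCons; exact: IH E.
- by case: t IH => [|b t] _ //=; case: ifP => // ab [<-]; exact: SSwp.
- rewrite -[Swp i.+1]/(shift (Swp i)) apply_shift.
  by case E: (apply_op t (Swp i)) => [w|] //= [<-]; apply: SCons; exact: IH E.
Qed.

Lemma plan_absorb_rep a b t v c : a != b -> Plan (b :: t) v c ->
  exists2 c', Plan (a :: t) v c' & c' <= c.+1.
Proof.
move=> ab P; inversion P as [|? ? ? ? P'|? y ? ? c' by' P'|? y ? ? c' by' P'];
  subst.
- by exists c.+1 => //; exact: PRep.
- by rewrite -(bool_neq_trans ab by'); exists c'; [exact: PKeep | lia].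
- rewrite -(bool_neq_trans ab by').
  by exists c'.+1; [apply: PKeep; exact: PRep | lia].
Qed.

Lemma plan_absorb_swp a b t v c : a != b -> Plan (b :: a :: t) v c ->
  exists2 c', Plan (a :: b :: t) v c' & c' <= c.+1.
Proof.
move=> ab P; have ba : b != a by rewrite eq_sym.
inversion P as [|? ? ? ? P'|? y ? ? c' by' P'|? y ? ? c' by' P']; subst.
- inversion P' as [|? ? ? ? P''|? z ? ? c'' az P''|? z ? ? c'' az P'']; subst.
  + by exists c.+1; [exact: PSwp | lia].
  + rewrite -(bool_neq_trans ba az).
    by exists c''.+1; [apply: PRep => //; exact: PKeep | lia].
  + rewrite -(bool_neq_trans ba az).
    by exists c''.+2; [apply: PRep => //; apply: PKeep; exact: PRep | lia].
- rewrite -(bool_neq_trans ab by').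
  have [c'' P'' le] := plan_absorb_rep ba P'.
  by exists c''; [exact: PKeep | lia].
- by exists c'; [do 2 apply: PKeep | lia].
Qed.

(* One step in front of a plan is absorbed at the price of at most one.
   The induction is on the length of the word, since the swap case of a plan
   descends two positions at once. *)
Lemma step_plan u u' v c : Step u u' -> Plan u' v c ->
  exists2 c', Plan u v c' & c' <= c.+1.
Proof.
elim: (size u).+1 {-2}u (ltnSn (size u)) u' v c => // n IH {}u lt_u u' v c.
move=> St0 P; case: St0 lt_u P => [a b t ab|a b t ab|a t t' St] lt_u P.
- exact: plan_absorb_rep ab P.
- exact: plan_absorb_swp ab P.
- have lt_t : size t < n := lt_u.
  inversion P as [|? ? ? ? P'|? y ? ? c' ay P'|? y ? ? c' ay P']; subst.
  + have [c'' P'' le] := IH _ lt_t _ _ _ St P'.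
    by exists c''; [exact: PKeep | lia].
  + have [c'' P'' le] := IH _ lt_t _ _ _ St P'.
    by exists c''.+1; [exact: PRep | lia].
  + (* The plan swaps the fixed first symbol with the symbol behind it, which
       the step may itself replace or swap further. *)
    inversion St as [x ? s xy|x ? s xy|? s ? St']; subst.
    * have ax : a = x by apply: (bool_neq_trans ay); rewrite eq_sym.
      subst x; by exists c'.+1; [apply: PRep => //; exact: PKeep | lia].
    * have ax : a = x by apply: (bool_neq_trans ay); rewrite eq_sym.
      subst x; have ya : y != a by rewrite eq_sym.
      have [c'' P'' le] := plan_absorb_rep ya P'.
      by exists c''.+1; [apply: PRep => //; exact: PKeep | lia].
    * have lt_s : size s < n := ltnW lt_t.
      have [c'' P'' le] := IH _ lt_s _ _ _ St' P'.
      by exists c''.+1; [exact: PSwp | lia].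
Qed.

Lemma transformation_plan u v ops : exec u ops = Some v ->
  exists2 c, Plan u v c & c <= size ops.
Proof.
elim: ops u => [|o ops IH] u /=.
  by case=> <-; exists 0 => //; exact: plan_refl.
case E: (apply_op u o) => [u'|] // /IH [c P le].
have [c' P' le'] := step_plan (apply_step E) P.
by exists c' => //; lia.
Qed.

Lemma least_witness (Q : nat -> Prop) n : Q n ->
  exists c, Q c /\ forall d, Q d -> c <= d.
Proof.
move=> Qn; have [|c [[Qc minc] _]] :=
  @dec_inh_nat_subset_has_unique_least_element Q (fun d => classic (Q d)).
  by exists n.
by exists c; split=> // d /minc /leP.
Qed.

Theorem lemma1 (m : nat) (u v : seq bool) :
  1 <= m -> size u = m -> size v = m ->
  exists ops : seq op, minimal_tilde_transformation u v ops.
Proof.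
move=> _ su sv.
have [n Pn] := @plan_exists u v (etrans su (esym sv)).
have [c [Pc minc]] := least_witness Pn.
have [ops [E S U]] := plan_realized Pc.
have T : tilde_transformation u v ops by exact/tilde_transformation_exec.
exists ops; split; first exact: T.
split; last exact: U.
split; first by exists ops.
move=> ops' /tilde_transformation_exec /transformation_plan [d Pd le].
by rewrite S; exact: leq_trans (minc _ Pd) le.
Qed.
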